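(* Let $k\ge 2$ and $G=\Theta(2,2,2k)$ with end vertices $u$ and $v$. Let $m\ge 4$ and let $L$ be an $m$-assignment for $G$ with $L(u)\ne L(v)$. Then $P(G,L)\ge P(G,m)$.
   Context: $\Theta(l_1,l_2,l_3)$ denotes two end vertices joined by three internally disjoint paths of lengths $l_1,l_2,l_3$. An $m$-assignment $L$ assigns to each vertex $w$ a set $L(w)$ of $m$ colors; $P(G,L)$ is the number of proper colorings $f$ of $G$ with $f(w)\in L(w)$ for all $w$. $P(G,m)$ is the chromatic polynomial of $G$. *)

From mathcomp Require Import all_boot.
Set Implicit Arguments. Unset Strict Implicit. Unset Printing Implicit Defensive.

(* Theta(2,2,2k) on vertex set 'I_(2k+3) (written 'I_(k.*2).+3):
   0 = u, 1 = v (end vertices); 2 = middle of first length-2 path;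
   3 = middle of second length-2 path; 4, ..., 2k+2 = the 2k-1 internal
   vertices of the length-2k path u - 4 - 5 - ... - (2k+2) - v. *)
Definition theta_edge (k a b : nat) : bool :=
  [|| (a == 0) && (b == 2), (a == 2) && (b == 1),
      (a == 0) && (b == 3), (a == 3) && (b == 1),
      (a == 0) && (b == 4),
      [&& 4 <= a, b == a.+1 & b <= (k.*2).+2]
    | (a == (k.*2).+2) && (b == 1)].

Definition theta_adj (k : nat) : rel 'I_(k.*2).+3 :=
  fun x y => theta_edge k x y || theta_edge k y x.

Definition proper (V C : finType) (adj : rel V) (f : {ffun V -> C}) : bool :=
  [forall x, forall y, adj x y ==> (f x != f y)].

(* P(G,L): number of proper L-colourings; colours drawn from a finite
   colour universe C (any list assignment uses finitely many colours). *)
Definition list_chrom (V C : finType) (adj : rel V) (L : V -> {set C}) : nat :=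
  #|[set f : {ffun V -> C} | [forall w, f w \in L w] && proper adj f]|.

Definition chrom (V : finType) (adj : rel V) (m : nat) : nat :=
  #|[set f : {ffun V -> 'I_m} | proper adj f]|.

From Pilot Require Import Defs.
From mathcomp Require Import all_boot zify.

(* Fix the colours of the end vertices u and v.  The middle vertices of the two
   short paths then have |L(w) \ {c(u), c(v)}| >= m - 2 choices each, and the long
   path contributes the number of L-colourings of a path with 2k - 1 inner
   vertices and prescribed end colours.  With q = m - 1, an induction two vertices
   at a time shows that this number is at least mu = (q^(2k) - 1)/(q + 1), its value
   for full lists and distinct ends.  Hence P(G,L) >= mu * P(C4,L), where C4 is the
   4-cycle u, x2, v, x3.  Since every choice count is at least q - 1 and since
   L(u) != L(v), double counting gives P(C4,L) >= q^4 + 2q^2 - 2q - 1, while the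
   same decomposition computes P(G,m) = (q+1)(q^2 (mu+1) + q (q-1)^2 mu) exactly;
   the comparison then only needs mu >= q^2 and q >= 3. *)

Set Implicit Arguments. Unset Strict Implicit. Unset Printing Implicit Defensive.

Section TupleSums.
Variable C : finType.

Lemma big_tuple0 (F : 0.-tuple C -> nat) : \sum_(t : 0.-tuple C) F t = F [tuple].
Proof. by rewrite (big_pred1 [tuple]) // => t; rewrite [t]tuple0; apply/eqP. Qed.

Lemma big_tuple_cons n (F : n.+1.-tuple C -> nat) :
  \sum_(t : n.+1.-tuple C) F t = \sum_(x : C) \sum_(t : n.-tuple C) F [tuple of x :: t].
Proof.
rewrite pair_big (reindex (fun p : C * n.-tuple C => [tuple of p.1 :: p.2])) //.
exists (fun t => (thead t, behead_tuple t)) => [[x t] _ | t _].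
  by congr pair; apply: val_inj.
by rewrite [in RHS](tuple_eta t).
Qed.

Lemma big_ffun_tuple n (F : {ffun 'I_n -> C} -> nat) :
  \sum_(f : {ffun 'I_n -> C}) F f = \sum_(t : n.-tuple C) F [ffun i => tnth t i].
Proof.
rewrite (reindex (fun t : n.-tuple C => [ffun i => tnth t i])) //.
exists (fun f : {ffun 'I_n -> C} => [tuple f i | i < n]) => [t _ | f _].
  by apply: eq_from_tnth => i; rewrite tnth_mktuple ffunE.
by apply/ffunP => i; rewrite ffunE tnth_mktuple.
Qed.

End TupleSums.

Lemma big_distr3 I J K (rI : seq I) (rJ : seq J) (rK : seq K)
    (F : I -> nat) (G : J -> nat) (H : K -> nat) c :
  c * ((\sum_(i <- rI) F i) * ((\sum_(j <- rJ) G j) * \sum_(k <- rK) H k)) =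
  \sum_(i <- rI) \sum_(j <- rJ) \sum_(k <- rK) c * (F i * (G j * H k)).
Proof.
rewrite !big_distrlr big_distrr /=; apply: eq_bigr => i _.
by rewrite big_distrr /=; apply: eq_bigr => j _; rewrite !big_distrr.
Qed.

Section SetSums.
Variable C : finType.
Implicit Types (A B D E : {set C}) (F : C -> nat).

Lemma sum_mem_mul A F : \sum_(x in A) F x = \sum_x (x \in A) * F x.
Proof. by rewrite big_mkcond; apply: eq_bigr => x _; case: (x \in A); rewrite ?mul1n. Qed.

Lemma sum_mem_mulr A F c : c * \sum_(x in A) F x = \sum_x c * ((x \in A) * F x).
Proof. by rewrite sum_mem_mul big_distrr. Qed.

Lemma sum_mem_card A : \sum_x (x \in A) = #|A|.
Proof. by rewrite -sum1_card sum_mem_mul; apply: eq_bigr => x _; rewrite muln1. Qed.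

Lemma sum_neq_card A b : \sum_(c in A) (c != b) + (b \in A) = #|A|.
Proof.
rewrite -sum1_card; case: (boolP (b \in A)) => Ab.
  rewrite (bigD1 b) //= [in RHS](bigD1 b) //= eqxx addnC; congr (_ + _).
  by apply: eq_bigr => c /andP [_ ->].
by rewrite addn0; apply: eq_bigr => c Ac; case: eqP Ac Ab => // ->->.
Qed.

Lemma leq_term_sum A F x : x \in A -> F x <= \sum_(c in A) F c.
Proof. by move=> Ax; rewrite (bigD1 x) //= leq_addr. Qed.

Lemma cardsD2E D u v : #|D :\ u :\ v| = \sum_(w in D) (u != w) * (v != w).
Proof.
rewrite -sum1_card big_mkcond [RHS]big_mkcond; apply: eq_bigr => w _.
by rewrite !inE ![w == _]eq_sym; case: (w \in D); case: (u == w); case: (v == w).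
Qed.

Lemma cardsD2_ge q D u v : #|D| = q.+1 -> q - 1 <= #|D :\ u :\ v|.
Proof.
move=> cardD; have := cardsD1 u D; have := cardsD1 v (D :\ u); rewrite cardD.
by case: (u \in D); case: (v \in _); lia.
Qed.

Lemma sum_cardsD2 A B D :
  \sum_(u in A) \sum_(v in B) #|D :\ u :\ v| =
  \sum_(w in D) (\sum_(u in A) (u != w)) * (\sum_(v in B) (v != w)).
Proof.
under eq_bigr => u _ do under eq_bigr => v _ do rewrite cardsD2E.
under eq_bigr => u _ do rewrite exchange_big /=.
by rewrite exchange_big; apply: eq_bigr => w _; rewrite big_distrlr.
Qed.

(* Each w \in D contributes (q + 1 - (w \in A)) (q + 1 - (w \in B)) >= q^2, and
   some w \in D lies outside A :&: B, which is smaller than D since A != B. *)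
Lemma sum_cardsD2_ge q A B D :
    #|A| = q.+1 -> #|B| = q.+1 -> #|D| = q.+1 -> A != B ->
  q ^ 3 + q ^ 2 + q <= \sum_(u in A) \sum_(v in B) #|D :\ u :\ v|.
Proof.
move=> cardA cardB cardD neAB; rewrite sum_cardsD2.
have sum_neq E w : #|E| = q.+1 -> \sum_(u in E) (u != w) = q.+1 - (w \in E).
  by move=> cardE; have := sum_neq_card E w; rewrite cardE; lia.
have ltIAD : #|A :&: B| < #|D|.
  rewrite cardD ltnS -ltnS -cardA; apply: proper_card.
  rewrite properE subsetIl subsetI subxx /=; apply: contra neAB => subAB.
  by rewrite eqEcard subAB cardA cardB leqnn.
have /subsetPn[w0 Dw0 ABw0] : ~~ (D \subset A :&: B).
  by apply: contraL ltIAD => /subset_leq_card; rewrite leqNgt.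
have cardDw0 : #|D :\ w0| = q by have := cardsD1 w0 D; rewrite Dw0 cardD; lia.
have : \sum_(w in D :\ w0) q * q <=
       \sum_(w in D :\ w0) (\sum_(u in A) (u != w)) * (\sum_(v in B) (v != w)).
  by apply: leq_sum => w _; rewrite !sum_neq //; apply: leq_mul; case: (w \in _); lia.
rewrite sum_nat_const cardDw0 (big_setD1 _ Dw0) /= !sum_neq //.
by move: ABw0; rewrite in_setI; case: (w0 \in A); case: (w0 \in B) => //= _; nia.
Qed.

End SetSums.

(* [mu q j = (q ^ (2j+2) - 1) / (q + 1)] is the number of proper (q+1)-colourings
   of a path with 2j+1 inner vertices whose two ends have fixed distinct colours. *)
Fixpoint mu q j := if j is j'.+1 then q * q * mu q j' + (q - 1) else q - 1.

Lemma mu_inv q j : 0 < q -> q.+1 * mu q j + 1 = q ^ j.*2.+2.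
Proof.
case: q => // p _; elim: j => [|j IHj] /=; rewrite subn1 /=.
  by rewrite expnS expn1; lia.
by rewrite doubleS 2!expnS -IHj; lia.
Qed.

Lemma sqr_leq_mu q j : 1 < q -> q * q <= mu q j.+1.
Proof.
move=> q_gt1 /=; have : 0 < mu q j by case: j => [|j] /=; lia.
nia.
Qed.

Section PathColourings.
Variable C : finType.
Implicit Types (L : nat -> {set C}) (a b c : C).

Fixpoint in_lists L (s : seq C) : bool :=
  if s is x :: s' then (x \in L 0) && in_lists (fun i => L i.+1) s' else true.

Lemma in_listsP x0 L s :
  reflect (forall i, i < size s -> nth x0 s i \in L i) (in_lists L s).
Proof.
elim: s L => [|x s IHs] L /=; first exact: ReflectT.
apply: (iffP andP) => [[Lx /IHs Ls] [|i] //= /Ls // | Ls].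
by split; [exact: (Ls 0) | apply/IHs => i; exact: (Ls i.+1)].
Qed.

(* [path_count b L N a] counts the colourings of a path on N vertices from the
   lists L 0, ..., L N.-1 that stay proper once the path is extended by an end
   of colour a before its first vertex and an end of colour b after its last. *)
Fixpoint path_count b L N a : nat :=
  if N is N'.+1 then \sum_(c in L 0 | c != a) path_count b (fun i => L i.+1) N' c
  else a != b.

Lemma path_countE b L N a :
  \sum_(p : N.-tuple C) (in_lists L p && path [rel x y | x != y] a (rcons p b))
  = path_count b L N a.
Proof.
elim: N L a => [|N IHN] L a; first by rewrite big_tuple0 /= andbT.
rewrite big_tuple_cons /= big_mkcondl /= [RHS]big_mkcond /=.
apply: eq_bigr => x _; rewrite -IHN eq_sym.
by case: (x \in L 0); case: (x != a) => //=; rewrite big1 // => t _; rewrite andbF.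
Qed.

Definition open_count b L N := \sum_(c in L 0) path_count b (fun i => L i.+1) N c.

Lemma open_count0 b L : open_count b L 0 + (b \in L 0) = #|L 0|.
Proof. exact: sum_neq_card. Qed.

Lemma path_countS b L N c :
  path_count b L N.+1 c + (c \in L 0) * path_count b (fun i => L i.+1) N c
  = open_count b L N.
Proof.
rewrite /open_count /=; case: (boolP (c \in L 0)) => L0c.
  by rewrite [RHS](bigD1 c) //= mul1n addnC.
rewrite mul0n addn0; apply: eq_bigl => x.
by case: eqP => [->|]; rewrite ?(negbTE L0c) ?andbT.
Qed.

Lemma open_countS b L N :
  open_count b L N.+1 + \sum_(c in L 1 :&: L 0) path_count b (fun i => L i.+2) N c
  = #|L 0| * open_count b (fun i => L i.+1) N.
Proof.
rewrite /open_count -sum1_card big_distrl big_mkcond [X in _ + X]big_mkcond.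
rewrite [RHS]big_mkcond -big_split /=; apply: eq_bigr => c _; rewrite in_setI.
case: (c \in L 0); rewrite ?andbF ?andbT //= mul1n.
have := path_countS b (fun i => L i.+1) N c; rewrite /open_count /= => <-.
by case: (c \in L 1); rewrite ?mul1n ?addn0.
Qed.

Lemma open_count_setID b L N :
  open_count b (fun i => L i.+1) N =
  \sum_(c in L 1 :&: L 0) path_count b (fun i => L i.+2) N c +
  \sum_(c in L 1 :\: L 0) path_count b (fun i => L i.+2) N c.
Proof. exact: big_setID. Qed.

Lemma open_count_ge q b L N :
  (forall i, #|L i| = q.+1) -> q ^ N.+1 <= open_count b L N.
Proof.
elim: N L => [|N IHN] L cardL.
  by have := open_count0 b L; rewrite cardL expn1; case: (b \in L 0); lia.
rewrite expnS; apply: leq_trans (leq_mul (leqnn q) (IHN _ (fun i => cardL i.+1))) _.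
have := open_countS b L N; rewrite open_count_setID cardL; lia.
Qed.

(* Unfolding two steps, with K = open_count b (fun i => L i.+1) N and
   F = path_count b (fun i => L i.+2) N, path_count b L N.+2 c equals
   (q - 1) K + \sum_(d in L 1 :\: L 0) F d + (c \in L 1) F c if c \in L 0, and
   q K + \sum_(d in L 1 :\: L 0) F d otherwise; as #|L 0| = #|L 1|, the set
   L 1 :\: L 0 is nonempty when c \in L 0 :\: L 1. *)
Lemma path_countSS_ge q m b L N c : 0 < q ->
    (forall i, #|L i| = q.+1) ->
    (forall c, m <= path_count b (fun i => L i.+2) N c) ->
  (q - 1) * open_count b (fun i => L i.+1) N + m <= path_count b L N.+2 c.
Proof.
set F := path_count b (fun i => L i.+2) N => q_gt0 cardL ge_m.
have splitF : \sum_(c in L 1) F c =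
              \sum_(c in L 1 :&: L 0) F c + \sum_(c in L 1 :\: L 0) F c.
  exact: open_count_setID.
have := path_countS b L N.+1 c; have := path_countS b (fun i => L i.+1) N c.
have := open_countS b L N; rewrite open_count_setID cardL; cbv beta; rewrite -/F.
have [c' L1c'] : exists c', c' \in L 1 by apply/card_gt0P; rewrite cardL.
have := ge_m c; have := ge_m c'; have := leq_term_sum F L1c'.
case: (boolP (c \in L 0)) => L0c; rewrite ?mul0n ?mul1n; last by nia.
case: (boolP (c \in L 1)) => L1c; rewrite ?mul0n ?mul1n; first by nia.
have [c'' D10c''] : exists c'', c'' \in L 1 :\: L 0.
  apply/card_gt0P; rewrite card_gt0 setD_eq0; move: L1c; apply: contraNN => sub10.
  by have /eqP -> : L 1 == L 0 by rewrite eqEcard sub10 !cardL leqnn.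
have := ge_m c''; have := leq_term_sum F D10c''; nia.
Qed.

Lemma path_count_odd_ge q b j L c : 0 < q ->
  (forall i, #|L i| = q.+1) -> mu q j <= path_count b L j.*2.+1 c.
Proof.
move=> q_gt0; elim: j L c => [|j IHj] L c cardL.
  have := path_countS b L 0 c; have := open_count_ge b 0 cardL.
  by rewrite expn1 /=; case: (c \in L 0); case: (c != b); lia.
have := path_countSS_ge c q_gt0 cardL (IHj _ ^~ (fun i => cardL i.+2)).
have := open_count_ge b j.*2.+1 (fun i => cardL i.+1); rewrite -(mu_inv j q_gt0) /=.
nia.
Qed.

Section FullLists.
Variables (q : nat) (b : C).
Hypothesis cardC : #|C| = q.+1.

Lemma open_count_full N : open_count b (fun _ => [set: C]) N = q ^ N.+1.
Proof.
elim: N => [|N IHN].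
  by have := open_count0 b (fun _ => [set: C]); rewrite in_setT cardsT cardC; lia.
have := open_countS b (fun _ => [set: C]) N; rewrite setIid cardsT cardC expnS -IHN.
rewrite /open_count; lia.
Qed.

Lemma path_count_full_odd j c : 0 < q ->
  path_count b (fun _ => [set: C]) j.*2.+1 c = mu q j + (c == b).
Proof.
move=> q_gt0; elim: j c => [|j IHj] c.
  have := path_countS b (fun _ => [set: C]) 0 c; rewrite open_count_full in_setT /=.
  by case: (c == b); lia.
have := path_countS b (fun _ => [set: C]) j.*2.+2 c.
have := path_countS b (fun _ => [set: C]) j.*2.+1 c; cbv beta.
rewrite !open_count_full (expnS q j.*2.+2) in_setT !mul1n IHj -(mu_inv j q_gt0).
rewrite doubleS [mu q _.+1]/=; lia.
Qed.

End FullLists.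

End PathColourings.

Section ThetaEdges.
Variable n : nat.
Local Notation N := n.*2.+1.

Lemma theta_edge_cases a b : theta_edge n.+1 a b ->
  [\/ a = 0 /\ (b = 2 \/ b = 3 \/ b = 4), b = 1 /\ (a = 2 \/ a = 3 \/ a = N.+3)
    | exists2 i, i.+1 < N & a = i.+4 /\ b = i.+4.+1].
Proof.
rewrite /theta_edge doubleS.
case/or4P=> [/andP[/eqP-> /eqP->] | /andP[/eqP-> /eqP->] | /andP[/eqP-> /eqP->] | ].
- by apply: Or31; split; [|left].
- by apply: Or32; split; [|left].
- by apply: Or31; split; [|right; left].
case/or4P=> [/andP[/eqP-> /eqP->] | /andP[/eqP-> /eqP->]
           | /and3P[le4a /eqP-> leb] | /andP[/eqP-> /eqP->]].
- by apply: Or32; split; [|right; left].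
- by apply: Or31; split; [|right; right].
- by apply: Or33; exists (a - 4); lia.
- by apply: Or32; split; [|right; right].
Qed.

Lemma theta_edge_ltn a b : theta_edge n.+1 a b -> a < N.+4 /\ b < N.+4.
Proof.
by case/theta_edge_cases=> [[-> [|[|]] ->] | [-> [|[|]] ->] | [i lt_iN [-> ->]]]; lia.
Qed.

Variable C : finType.

Lemma proper_thetaP (g : nat -> C) :
  reflect (forall a b, theta_edge n.+1 a b -> g a != g b)
          (Defs.proper (@theta_adj n.+1) [ffun i : 'I_(n.+1).*2.+3 => g i]).
Proof.
apply: (iffP forallP) => [g_pr a b ab | g_pr x].
  have [lt_a lt_b] := theta_edge_ltn ab.
  move: (g_pr (Ordinal lt_a)) => /forallP /(_ (Ordinal lt_b)).
  by rewrite /theta_adj /= ab !ffunE; apply.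
apply/forallP=> y; apply/implyP; rewrite !ffunE => /orP[] xy; first exact: g_pr.
by rewrite eq_sym; apply: g_pr.
Qed.

Lemma theta_edge_inner i : i.+1 < N -> theta_edge n.+1 i.+4 i.+4.+1.
Proof. by rewrite /theta_edge doubleS; lia. Qed.

Lemma theta_edge_last : theta_edge n.+1 N.+3 1.
Proof. by rewrite /theta_edge doubleS; lia. Qed.

Section NthColouring.
Variables (u v x2 x3 : C) (p : N.-tuple C).
Local Notation col := (nth u [:: u, v, x2, x3 & p]).

Lemma proper_theta_nth :
  Defs.proper (@theta_adj n.+1) [ffun i : 'I_(n.+1).*2.+3 => col i] =
  [&& x2 != u, x2 != v, x3 != u, x3 != v & path [rel x y | x != y] u (rcons p v)].
Proof.
have nth_pv i : nth u (rcons p v) i = if i < N then col i.+4 else if i == N then v else u.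
  by rewrite nth_rcons size_tuple.
apply/proper_thetaP/and5P => [col_pr | [x2u x2v x3u x3v /(pathP u) uv_path] a b].
  split; [by rewrite eq_sym (col_pr 0 2) | exact: (col_pr 2 1) |
           by rewrite eq_sym (col_pr 0 3) | exact: (col_pr 3 1) | ].
  apply/(pathP u) => -[_ | i]; rewrite /= !nth_pv; first exact: (col_pr 0 4).
  rewrite size_rcons size_tuple !ltnS => le_iN; rewrite (leq_trans _ le_iN) //.
  case: ltnP => [lt_iN | le_Ni]; first exact/col_pr/theta_edge_inner.
  have -> : i = n.*2 by lia.
  by rewrite eqxx; exact: (col_pr _ 1 theta_edge_last).
have pathN i : i <= N -> nth u (u :: rcons p v) i != nth u (rcons p v) i.
  by move=> le_iN; apply: uv_path; rewrite size_rcons size_tuple.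
case/theta_edge_cases=> [[-> [|[|]] ->] | [-> [|[|]] ->] | [i lt_iN [-> ->]]] /=;
  rewrite 1?(eq_sym u x2) 1?(eq_sym u x3) //.
- by have := pathN 0 isT; rewrite /= nth_pv.
- by have := pathN N (leqnn N); rewrite /= !nth_pv ltnSn ltnn eqxx.
- by have := pathN i.+1 (ltnW lt_iN); rewrite /= !nth_pv ltnW // lt_iN.
Qed.

Lemma in_lists_theta_nth (L : 'I_(n.+1).*2.+3 -> {set C}) :
  [forall w, [ffun i : 'I_(n.+1).*2.+3 => col i] w \in L w] =
  [&& u \in L (inord 0), v \in L (inord 1), x2 \in L (inord 2), x3 \in L (inord 3)
    & in_lists (fun i => L (inord i.+4)) p].
Proof.
apply/forallP/and5P => [colL | [Lu Lv Lx2 Lx3 /(in_listsP u) Lp] w].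
  have colL' i : i < (n.+1).*2.+3 -> col i \in L (inord i).
    by move=> lt_i; have := colL (inord i); rewrite ffunE inordK.
  split; [exact: (colL' 0) | exact: (colL' 1) | exact: (colL' 2) | exact: (colL' 3) | ].
  apply/(in_listsP u) => i; rewrite size_tuple => lt_iN; apply: (colL' i.+4); lia.
rewrite ffunE -[w in L w]inord_val.
case: w => -[|[|[|[|i]]]] //= lt_i; apply: Lp; rewrite size_tuple; lia.
Qed.

End NthColouring.
End ThetaEdges.

Section ThetaCount.
Variable C : finType.
Implicit Types L : nat -> {set C}.

(* The number of proper L-colourings of the 4-cycle 0 - 2 - 1 - 3 - 0. *)
Definition c4_count L := \sum_(u in L 0) \sum_(v in L 1) #|L 2 :\ u :\ v| * #|L 3 :\ u :\ v|.

Definition theta_count L N :=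
  \sum_(u in L 0) \sum_(v in L 1)
    #|L 2 :\ u :\ v| * #|L 3 :\ u :\ v| * path_count v (fun i => L i.+4) N u.

Lemma list_chrom_theta n (L : 'I_(n.+1).*2.+3 -> {set C}) :
  list_chrom (@theta_adj n.+1) L = theta_count (fun i => L (inord i)) n.*2.+1.
Proof.
rewrite /list_chrom -sum1dep_card big_mkcond big_ffun_tuple /theta_count sum_mem_mul.
rewrite big_tuple_cons; apply: eq_bigr => u _.
rewrite sum_mem_mulr big_tuple_cons; apply: eq_bigr => v _.
rewrite mulnA -(mulnA #|_|) -path_countE -!sum_mem_card big_distr3.
rewrite big_tuple_cons; apply: eq_bigr => x2 _.
rewrite big_tuple_cons; apply: eq_bigr => x3 _; apply: eq_bigr => p _.
have -> : [ffun i => tnth [tuple of u :: [tuple of v :: [tuple of x2 :: [tuple of x3 :: p]]]] i]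
        = [ffun i : 'I_(n.+1).*2.+3 => nth u [:: u, v, x2, x3 & p] i].
  by apply/ffunP => i; rewrite !ffunE (tnth_nth u).
rewrite in_lists_theta_nth proper_theta_nth !in_setD1 !mulnb; apply: (congr1 nat_of_bool).
apply/idP/idP; first by case/andP=> /and5P[-> -> -> -> ->] /and5P[-> -> -> -> ->].
by case/and5P=> /andP[-> ->] /and3P[-> -> ->] /and3P[-> -> ->] -> ->.
Qed.

Lemma theta_count_ge q j L : 0 < q -> (forall i, #|L i| = q.+1) ->
  mu q j * c4_count L <= theta_count L j.*2.+1.
Proof.
move=> q_gt0 cardL; rewrite big_distrr /=; apply: leq_sum => u _.
rewrite big_distrr; apply: leq_sum => v _.
by rewrite [leqLHS]/= mulnC leq_mul2l path_count_odd_ge ?orbT.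
Qed.

(* With a, b >= q - 1 choices for the vertices 2 and 3,
   (q - 1) (a + b) <= a b + (q - 1)^2. *)
Lemma c4_count_ge q L : 0 < q -> (forall i, #|L i| = q.+1) -> L 0 != L 1 ->
  q ^ 4 + 2 * q ^ 2 <= c4_count L + 2 * q + 1.
Proof.
case: q => // c _ cardL neL01.
have ge_c i u v : c <= #|L i :\ u :\ v| by have := cardsD2_ge u v (cardL i); rewrite subn1.
have : \sum_(u in L 0) \sum_(v in L 1) (c * #|L 2 :\ u :\ v| + c * #|L 3 :\ u :\ v|) <=
       \sum_(u in L 0) \sum_(v in L 1) (#|L 2 :\ u :\ v| * #|L 3 :\ u :\ v| + c * c).
  by apply: leq_sum => u _; apply: leq_sum => v _; have := ge_c 2 u v; have := ge_c 3 u v; nia.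
have -> : \sum_(u in L 0) \sum_(v in L 1) (c * #|L 2 :\ u :\ v| + c * #|L 3 :\ u :\ v|) =
    c * \sum_(u in L 0) \sum_(v in L 1) #|L 2 :\ u :\ v| +
    c * \sum_(u in L 0) \sum_(v in L 1) #|L 3 :\ u :\ v|.
  rewrite !big_distrr -big_split /=; apply: eq_bigr => u _.
  by rewrite !big_distrr -big_split.
under [X in _ <= X]eq_bigr do rewrite big_split /= sum_nat_const cardL.
rewrite big_split /= sum_nat_const cardL.
have := leq_mul (leqnn c) (sum_cardsD2_ge (cardL 0) (cardL 1) (cardL 2) neL01).
have := leq_mul (leqnn c) (sum_cardsD2_ge (cardL 0) (cardL 1) (cardL 3) neL01).
rewrite /c4_count; lia.
Qed.

Section FullLists.
Variable q : nat.
Hypothesis cardC : #|C| = q.+1.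

Lemma cardsTD2 u v : #|[set: C] :\ u :\ v| = q - (v != u).
Proof.
have := cardsD1 u [set: C]; have := cardsD1 v ([set: C] :\ u).
by rewrite cardsT cardC !inE andbT; lia.
Qed.

Lemma theta_count_full j : 0 < q ->
  theta_count (fun _ => [set: C]) j.*2.+1 =
  q.+1 * (q * q * (mu q j).+1 + q * ((q - 1) * (q - 1) * mu q j)).
Proof.
move=> q_gt0; rewrite /theta_count -cardC -cardsT -sum_nat_const; cbv beta.
apply: eq_bigr => u _; rewrite (big_setD1 u) ?in_setT // cardsTD2 eqxx.
rewrite (path_count_full_odd _ cardC) // eqxx subn0 addn1; congr (_ + _).
have cardTu : #|[set: C] :\ u| = q.
  by have := cardsD1 u [set: C]; rewrite cardsT cardC in_setT; lia.
rewrite (eq_bigr (fun _ => (q - 1) * (q - 1) * mu q j)) ?sum_nat_const ?cardTu // => v.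
rewrite !inE andbT => vu.
by rewrite cardsTD2 (path_count_full_odd _ cardC) // vu eq_sym (negbTE vu) addn0.
Qed.

End FullLists.

End ThetaCount.

(* Writing q = p + 3, the bound reduces to q^3 + q^2 <= (2q^2 - 3q - 1) mu,
   which follows from mu >= q^2. *)
Lemma theta_count_full_le (C D : finType) q j (L : nat -> {set D}) :
    #|C| = q.+1 -> 3 <= q -> (forall i, #|L i| = q.+1) -> L 0 != L 1 ->
  theta_count (fun _ => [set: C]) j.+1.*2.+1 <= mu q j.+1 * c4_count L.
Proof.
move=> cardC q_ge3 cardL neL01; rewrite (theta_count_full cardC); last by lia.
have := sqr_leq_mu j (ltnW q_ge3); have := c4_count_ge (ltnW (ltnW q_ge3)) cardL neL01.
move: (mu q j.+1) (c4_count L) => m S hS qm; have := leq_mul (leqnn m) hS.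
have [p def_q] : exists p, q = p.+3 by exists (q - 3); lia.
have -> : q - 1 = p.+2 by lia.
rewrite def_q in qm *.
have := leq_mul (leqnn (2 * p * p + 9 * p + 8)) qm.
have : p.+3 ^ 3 + p.+3 ^ 2 <= (2 * p * p + 9 * p + 8) * (p.+3 * p.+3).
  have -> : p.+3 ^ 3 + p.+3 ^ 2 = p.+4 * (p.+3 * p.+3) by lia.
  by apply: leq_mul => //; nia.
lia.
Qed.

Lemma chrom_list_chrom (V : finType) (adj : rel V) m :
  chrom adj m = list_chrom adj (fun _ => [set: 'I_m]).
Proof.
apply: eq_card => f; rewrite !inE.
by have -> : [forall w, f w \in [set: 'I_m]] by apply/forallP => w; rewrite inE.
Qed.

Theorem lemma24 (k m : nat) (C : finType)
    (L : 'I_(k.*2).+3 -> {set C}) :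
  2 <= k -> 4 <= m ->
  (forall w, #|L w| = m) ->
  L (inord 0) != L (inord 1) ->
  chrom (@theta_adj k) m <= list_chrom (@theta_adj k) L.
Proof.
case: k L => [|[|n]] L // _; case: m => [|q] // q_ge3 cardL neL01.
have cardL' i : #|L (inord i)| = q.+1 := cardL _.
rewrite chrom_list_chrom !list_chrom_theta.
apply: leq_trans (theta_count_full_le n (card_ord q.+1) q_ge3 cardL' neL01) _.
by apply: theta_count_ge cardL'; lia.
Qed.
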